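(* For all integers $n\geq 3$ and $k\geq 2$, the digraph $M(n,k)$ is highly arc-transitive, has in-degree and out-degree equal to $n-1$ at every vertex, and does not have property $Z$.
   Context: Construction of $M(n,k)$: let $F=\langle a_1\rangle*\cdots*\langle a_n\rangle$ be the free product of $n$ cyclic groups of order $k$. Form the digraph $T^*$ with vertex set $F\times\{1,\dots,n\}$, arcs in both directions between $(v,i)$ and $(v,j)$ for all $v\in F$, $i\neq j$, and ''cycle arcs'' $(v,i)\to(va_i,i)$. Form $T^*\otimes\vec K_2$ with vertex set $VT^*\times\{-,+\}$ and an arc $(x,-)\to(y,+)$ whenever $x\to y$ in $T^*$. $M(n,k)$ is obtained by identifying $((v,i),-)$ with $((va_i,i),+)$ for all $v,i$ (contracting the arcs coming from cycle arcs), keeping the remaining arcs $((v,i),-)\to((v,j),+)$, $i\ne j$. A $k$-arc is a sequence $(x_0,\dots,x_k)$ of vertices with $x_i\to x_{i+1}$; a digraph is highly arc-transitive if its automorphism group is transitive on $k$-arcs for every $k$. A digraph has property $Z$ if there is a digraph homomorphism from it onto the two-way infinite directed line (vertex set $\mathbb{Z}$, arcs $i\to i+1$). *)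

From mathcomp Require Import all_boot all_order all_algebra.
Set Implicit Arguments. Unset Strict Implicit. Unset Printing Implicit Defensive.

(* Elements of F are represented by their (unique) reduced normal form:
   a word [:: (i1,e1); ...; (im,em)] standing for a_{i1}^{e1} ... a_{im}^{em},
   with 0 < e_t < k and consecutive indices distinct. *)
Definition reducedb (n k : nat) (w : seq ('I_n * nat)) : bool :=
  all (fun p => (0 < p.2) && (p.2 < k)) w &&
  sorted (fun a b : 'I_n => a != b) (map fst w).

Definition FP (n k : nat) := {w : seq ('I_n * nat) | reducedb k w}.

Definition gen_mul_seq (n k : nat) (i : 'I_n) (w : seq ('I_n * nat))
  : seq ('I_n * nat) :=
  match rev w with
  | (j, e) :: r =>
      if j == i then
        (if e.+1 == k then rev r else rcons (rev r) (j, e.+1))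
      else rcons w (i, 1)
  | [::] => [:: (i, 1)]
  end.

(* v |-> v a_i on F (the default branch of insubd is never used when k >= 2) *)
Definition gen_mul (n k : nat) (i : 'I_n) (v : FP n k) : FP n k :=
  insubd v (gen_mul_seq k i (val v)).

Definition Tstar_arc (n k : nat) (x y : FP n k * 'I_n) : Prop :=
  (x.1 = y.1 /\ x.2 <> y.2)
  \/ (y = (gen_mul x.2 x.1, x.2)).

Definition is_cycle_arc (n k : nat) (x y : FP n k * 'I_n) : Prop :=
  y = (gen_mul x.2 x.1, x.2).

(* ---------- T* (x) K_2 : vertices VT* x {-,+}; false = -, true = + ---------- *)
Definition tensor_arc (n k : nat) (a b : (FP n k * 'I_n) * bool) : Prop :=
  a.2 = false /\ b.2 = true /\ Tstar_arc a.1 b.1.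

(* After identifying ((v,i),-) with ((v a_i, i),+), every identification class
   contains exactly one '-' vertex; we use ((v,i),-), i.e. the pair (v,i), as the
   name of the class.  Class membership: *)
Definition Mclass (n k : nat) (x : FP n k * 'I_n) (a : (FP n k * 'I_n) * bool)
  : Prop :=
  a = (x, false) \/ a = ((gen_mul x.2 x.1, x.2), true).

(* Arcs of M(n,k): images of arcs of T* (x) K_2 which do not come from cycle arcs
   (those are contracted). *)
Definition Marc (n k : nat) (x y : FP n k * 'I_n) : Prop :=
  exists a b, Mclass x a /\ Mclass y b /\ tensor_arc a b /\
              ~ is_cycle_arc a.1 b.1.

Definition is_automorphism (V : Type) (E : V -> V -> Prop) (g : V -> V) : Prop :=
  bijective g /\ forall x y, E x y <-> E (g x) (g y).

(* an s-arc (x_0,...,x_s), encoded by x : nat -> V (values beyond s irrelevant) *)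
Definition is_sarc (V : Type) (E : V -> V -> Prop) (s : nat) (x : nat -> V) : Prop :=
  forall t, t < s -> E (x t) (x t.+1).

Definition highly_arc_transitive (V : Type) (E : V -> V -> Prop) : Prop :=
  forall (s : nat) (x y : nat -> V), is_sarc E s x -> is_sarc E s y ->
    exists g, is_automorphism E g /\ forall t, t <= s -> g (x t) = y t.

Definition out_degree_is (V : eqType) (E : V -> V -> Prop) (x : V) (d : nat) : Prop :=
  exists s : seq V, uniq s /\ size s = d /\ forall y, E x y <-> y \in s.

Definition in_degree_is (V : eqType) (E : V -> V -> Prop) (x : V) (d : nat) : Prop :=
  exists s : seq V, uniq s /\ size s = d /\ forall y, E y x <-> y \in s.

Definition property_Z (V : Type) (E : V -> V -> Prop) : Prop :=
  exists phi : V -> int,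
    (forall x y, E x y -> phi y = (phi x + 1)%R) /\
    (forall z : int, exists x, phi x = z).

From mathcomp Require Import all_boot all_algebra all_fingroup.
From mathcomp Require Import zify.
Set Implicit Arguments. Unset Strict Implicit. Unset Printing Implicit Defensive.

(* In M(n,k) there is an arc (v a_j, i) -> (v, j) exactly when i <> j. Left
   multiplication by F acts by automorphisms, and so does relabelling by a
   permutation p the letters of every normal form whose first letter is not fixed
   by p. Before its end, an s-arc ending at (1, c) stays among the words starting
   with c, whereas the out-neighbours of (1, c) are the (a_j^-1, j), j <> c, and a
   transposition relabelling the other branches moves any of them to any other
   while fixing the s-arc; induction on s gives high arc-transitivity. *)

Lemma sorted_rcons_rcons (T : Type) (R : rel T) s a b :
  sorted R (rcons (rcons s a) b) = sorted R (rcons s a) && R a b.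
Proof. by case: s => [|c s] /=; rewrite ?andbT // rcons_path last_rcons. Qed.

Section ReducedWords.
Variables (n k : nat).
Hypothesis k_gt1 : 1 < k.

Local Notation word := (seq ('I_n * nat)).
Local Notation gms := (@gen_mul_seq n k).

Definition head_letter (w : word) : option 'I_n := ohead [seq p.1 | p <- w].
Definition last_letter (w : word) : option 'I_n := last None [seq Some p.1 | p <- w].

Lemma last_letter_rcons w i e : last_letter (rcons w (i, e)) = Some i.
Proof. by rewrite /last_letter map_rcons last_rcons. Qed.

Lemma head_letter_rcons w p : w != [::] -> head_letter (rcons w p) = head_letter w.
Proof. by case: w. Qed.

Lemma gen_mul_seq_rcons j w i e : gms j (rcons w (i, e)) =
  if i == j then (if e.+1 == k then w else rcons w (i, e.+1))
  else rcons (rcons w (i, e)) (j, 1).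
Proof. by rewrite /gen_mul_seq rev_rcons revK. Qed.

Lemma reducedb_rcons w i e : reducedb k (rcons w (i, e)) =
  [&& reducedb k w, 0 < e < k & last_letter w != Some i].
Proof.
rewrite /reducedb all_rcons map_rcons.
case/lastP: w => [|w [i' e']] /=; first by rewrite andbT.
rewrite map_rcons sorted_rcons_rcons last_letter_rcons.
by case: (all _ _) => //=; case: (0 < e < k) => //=; rewrite andbC.
Qed.

Lemma reducedb_gen_mul_seq j w : reducedb k w -> reducedb k (gms j w).
Proof.
case/lastP: w => [|w [i e]]; first by rewrite /reducedb /= k_gt1.
rewrite gen_mul_seq_rcons reducedb_rcons => /and3P [w_red /andP [e_gt0 e_ltk] w_last].
case: eqP => [_|/eqP ij].
  case: eqP => // /eqP e1_neq; rewrite reducedb_rcons w_red w_last andbT /=.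
  by rewrite ltn_neqAle e1_neq e_ltk.
rewrite reducedb_rcons last_letter_rcons reducedb_rcons w_red e_gt0 e_ltk w_last /= k_gt1.
by apply: contra ij => /eqP [->].
Qed.

Lemma iter_gen_mul_seq_fresh j w t : last_letter w != Some j -> 0 < t < k ->
  iter t (gms j) w = rcons w (j, t).
Proof.
move=> w_last; elim: t => // t IH /andP [_ t_ltk].
case: t IH t_ltk => [|t] IH t_ltk.
  case/lastP: w w_last {IH} => [|w [i e]] w_last //=.
  rewrite gen_mul_seq_rcons; case: (eqVneq i j) w_last => [->|] //.
  by rewrite last_letter_rcons eqxx.
by rewrite iterS IH ?(ltnW t_ltk) // gen_mul_seq_rcons eqxx (ltn_eqF t_ltk).
Qed.

Lemma iter_gen_mul_seq_order j w : reducedb k w -> iter k (gms j) w = w.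
Proof.
have k1_bounds : 0 < k.-1 < k by case: (k) k_gt1 => [|[|k']] //= _; rewrite ltnS leqnn.
have fresh w' : last_letter w' != Some j -> iter k (gms j) w' = w'.
  move=> w'_last.
  have -> : iter k (gms j) w' = gms j (iter k.-1 (gms j) w').
    by rewrite -iterS prednK // ltnW.
  by rewrite iter_gen_mul_seq_fresh // gen_mul_seq_rcons eqxx prednK ?eqxx // ltnW.
case/lastP: w => [|w [i e]]; first by move=> _; apply: fresh.
have [->|ij] := eqVneq i j; last first.
  by move=> _; apply: fresh; rewrite last_letter_rcons; apply: contra ij => /eqP [->].
rewrite reducedb_rcons => /and3P [_ e_bounds w_last].
by rewrite -iter_gen_mul_seq_fresh // -iterD addnC iterD fresh.
Qed.

End ReducedWords.

Section FreeProduct.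
Variables (n k : nat).
Hypothesis k_gt1 : 1 < k.

Local Notation F := (FP n k).
Local Notation gms := (@gen_mul_seq n k).
Local Notation gm := (@gen_mul n k).

Definition fp1 : F := exist _ [::] (isT : reducedb k [::]).

Lemma val_gen_mul j (v : F) : val (gm j v) = gms j (val v).
Proof. exact: (insubdK _ (reducedb_gen_mul_seq k_gt1 j (valP v))). Qed.

Lemma val_iter_gen_mul t j (v : F) : val (iter t (gm j) v) = iter t (gms j) (val v).
Proof. by elim: t => // t IH; rewrite iterS val_gen_mul IH. Qed.

Lemma iter_gen_mul_order j (v : F) : iter k (gm j) v = v.
Proof. by apply: val_inj; rewrite val_iter_gen_mul iter_gen_mul_seq_order ?(valP v). Qed.

Lemma iter_gen_mul_mulk t j (v : F) : iter (t * k) (gm j) v = v.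
Proof. by elim: t => // t IH; rewrite mulSn iterD IH iter_gen_mul_order. Qed.

Definition gen_inv j (v : F) : F := iter k.-1 (gm j) v.

Lemma gen_invK j : cancel (gen_inv j) (gm j).
Proof. by move=> v; rewrite /gen_inv -iterS prednK ?iter_gen_mul_order // ltnW. Qed.

Lemma gen_mulK j : cancel (gm j) (gen_inv j).
Proof. by move=> v; rewrite /gen_inv -iterSr prednK ?iter_gen_mul_order // ltnW. Qed.

Lemma val_gen_inv1 j : val (gen_inv j fp1) = [:: (j, k.-1)].
Proof.
rewrite /gen_inv val_iter_gen_mul (@iter_gen_mul_seq_fresh _ _ _ [::]) //.
by case: (k) k_gt1 => [|[|k']] //= _; rewrite ltnS leqnn.
Qed.

Definition fp_mul (g v : F) : F :=
  foldl (fun acc p => iter p.2 (gm p.1) acc) g (val v).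

Lemma fp_mul_gen_mul g j v : fp_mul g (gm j v) = gm j (fp_mul g v).
Proof.
rewrite /fp_mul val_gen_mul; case/lastP: (val v) => [//|w [i e]].
rewrite gen_mul_seq_rcons; case: eqVneq => [->|_]; last by rewrite !foldl_rcons.
case: eqP => [e1_k|_]; last by rewrite !foldl_rcons.
by rewrite foldl_rcons /= -iterS e1_k iter_gen_mul_order.
Qed.

Lemma fp_mul_iter g t j v : fp_mul g (iter t (gm j) v) = iter t (gm j) (fp_mul g v).
Proof. by elim: t => // t IH; rewrite iterS fp_mul_gen_mul IH. Qed.

Lemma fp_mul1g v : fp_mul fp1 v = v.
Proof.
apply: val_inj; rewrite /fp_mul; case: v => /= w; move/idP.
elim/last_ind: w => [//|w [i e] IH].
rewrite reducedb_rcons => /and3P [w_red e_bounds w_last].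
rewrite foldl_rcons /= val_iter_gen_mul.
have -> : val (foldl _ fp1 w) = w := IH w_red.
exact: iter_gen_mul_seq_fresh.
Qed.

Lemma fp_mulA h g v : fp_mul h (fp_mul g v) = fp_mul (fp_mul h g) v.
Proof.
rewrite /fp_mul; elim/last_ind: (val v) => [//|w p IH].
by rewrite !foldl_rcons -IH -/(fp_mul h _) fp_mul_iter.
Qed.

Lemma fp_mul_left_inverse g : exists h, fp_mul h g = fp1.
Proof.
rewrite /fp_mul; elim/last_ind: (val g) fp1 => [|w [i t] IH] x; first by exists x.
have [h h_w] := IH (iter (t * k.-1) (gm i) x).
exists h; rewrite foldl_rcons /= h_w -iterD.
have -> : t + t * k.-1 = t * k by rewrite -[in RHS](prednK (ltnW k_gt1)) mulnS.
by rewrite iter_gen_mul_mulk.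
Qed.

Lemma fp_mul_can g : exists h, cancel (fp_mul g) (fp_mul h) /\ cancel (fp_mul h) (fp_mul g).
Proof.
have [h hg1] := fp_mul_left_inverse g; have [h' h'h1] := fp_mul_left_inverse h.
have h'_g : h' = g by rewrite -[h']/(fp_mul h' fp1) -hg1 fp_mulA h'h1 fp_mul1g.
exists h; split => v; rewrite fp_mulA.
  by rewrite hg1 fp_mul1g.
by rewrite -{1}h'_g h'h1 fp_mul1g.
Qed.

End FreeProduct.

Lemma automorphism_can (V : Type) (E : V -> V -> Prop) (f g : V -> V) :
  (forall x y, E x y -> E (f x) (f y)) -> (forall x y, E x y -> E (g x) (g y)) ->
  cancel f g -> cancel g f -> is_automorphism E f.
Proof.
move=> f_arc g_arc fK gK; split; first by exists g.
by move=> x y; split=> [/f_arc // | /g_arc]; rewrite !fK.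
Qed.

Lemma automorphism_comp (V : Type) (E : V -> V -> Prop) (f g : V -> V) :
  is_automorphism E f -> is_automorphism E g -> is_automorphism E (f \o g).
Proof.
move=> [f_bij f_arc] [g_bij g_arc]; split; first exact: bij_comp.
by move=> x y; rewrite g_arc f_arc.
Qed.

Section Arcs.
Variables (n k : nat).
Hypothesis k_gt1 : 1 < k.

Local Notation F := (FP n k).
Local Notation gm := (@gen_mul n k).
Local Notation E := (@Marc n k).

Lemma MarcE (x y : F * 'I_n) : E x y <-> x.1 = gm y.2 y.1 /\ x.2 <> y.2.
Proof.
split=> [[a [b [x_a [y_b [[a2 [b2 ab]] not_cycle]]]]] | [xy1 xy2]].
  case: x_a a2 ab not_cycle => -> // _; case: y_b b2 => -> // _.
  by case.
exists (x, false), ((gm y.2 y.1, y.2), true).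
split; first by left.
split; first by right.
by split=> [|[_ /esym /xy2 //]]; do 2!split => //; left.
Qed.

Lemma Marc_out x y : E x y <-> y.1 = gen_inv y.2 x.1 /\ x.2 != y.2.
Proof.
rewrite MarcE; split=> [[-> /eqP xy2] | [-> /eqP xy2]]; split=> //.
  by rewrite gen_mulK.
by rewrite gen_invK.
Qed.

Definition translate (g : F) (x : F * 'I_n) := (fp_mul g x.1, x.2).

Lemma translate_arc g x y : E x y -> E (translate g x) (translate g y).
Proof. by move=> /MarcE [xy1 xy2]; apply/MarcE; rewrite /= xy1 fp_mul_gen_mul. Qed.

Lemma translate_automorphism g : is_automorphism E (translate g).
Proof.
have [h [gK hK]] := fp_mul_can k_gt1 g.
apply: (automorphism_can (g := translate h)); try exact: translate_arc.
  by move=> [v i]; rewrite /translate /= gK.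
by move=> [v i]; rewrite /translate /= hK.
Qed.

End Arcs.

Section Relabel.
Variables (n k : nat).
Hypothesis k_gt1 : 1 < k.
Variables (p : {perm 'I_n}) (C : pred 'I_n).

Local Notation word := (seq ('I_n * nat)).
Local Notation F := (FP n k).
Local Notation gms := (@gen_mul_seq n k).
Local Notation gm := (@gen_mul n k).
Local Notation E := (@Marc n k).

Definition relabel_word (w : word) : word := [seq (p q.1, q.2) | q <- w].

Lemma reducedb_relabel_word w : reducedb k (relabel_word w) = reducedb k w.
Proof.
rewrite /reducedb /relabel_word all_map -map_comp; congr (_ && _).
rewrite (map_comp p fst); elim: (map fst w) => [|a s IH] //=; case: s IH => [|b s] //= IH.
by rewrite (inj_eq perm_inj) IH.
Qed.

Lemma relabel_word_gen_mul_seq j w : relabel_word (gms j w) = gms (p j) (relabel_word w).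
Proof.
case/lastP: w => [|w [i e]] //.
rewrite /relabel_word map_rcons !gen_mul_seq_rcons /= (inj_eq perm_inj).
by case: eqP => _; [case: eqP => _ |]; rewrite ?map_rcons.
Qed.

Lemma head_letter_relabel_word w : head_letter (relabel_word w) = omap p (head_letter w).
Proof. by case: w. Qed.

Lemma head_letter_gen_mul_seq j w :
  [\/ head_letter (gms j w) = head_letter w,
      head_letter w = Some j /\ gms j w = [::]
    | head_letter (gms j w) = Some j /\ w = [::]].
Proof.
case/lastP: w => [|w [i e]]; first by constructor 3.
rewrite gen_mul_seq_rcons; case: w => [|a w].
  case: eqVneq => [->|_]; last by constructor 1.
  by case: eqP => _; [constructor 2 | constructor 1].
by case: eqP => _; [case: eqP|]; constructor 1.
Qed.

Definition relabel_fp (v : F) : F := insubd v (relabel_word (val v)).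

Lemma val_relabel_fp v : val (relabel_fp v) = relabel_word (val v).
Proof. by apply: insubdK; rewrite -topredE /= reducedb_relabel_word (valP v). Qed.

(* Branches of the Cayley tree of F are indexed by the first letter of the normal
   form; those starting with a letter of C are fixed, the others are relabelled
   by p, and the vertex indices follow along. *)
Definition fixed_branch (v : F) : bool := oapp C false (head_letter (val v)).
Definition relabel (v : F) : F := if fixed_branch v then v else relabel_fp v.
Definition relabel_perm (v : F) : {perm 'I_n} := if fixed_branch v then 1%g else p.
Definition relabel_vertex (x : F * 'I_n) := (relabel x.1, relabel_perm x.1 x.2).

Lemma val_relabel v :
  val (relabel v) = if fixed_branch v then val v else relabel_word (val v).
Proof. by rewrite /relabel; case: ifP; rewrite ?val_relabel_fp. Qed.

Lemma relabel_vertex1 i : relabel_vertex (fp1 n k, i) = (fp1 n k, p i).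
Proof. by congr (_, _); apply: val_inj; rewrite /= val_relabel_fp. Qed.

Hypothesis p_fixes_C : forall c, C c -> p c = c.

Lemma fixed_branch_relabel_fp v : fixed_branch (relabel_fp v) = fixed_branch v.
Proof.
rewrite /fixed_branch val_relabel_fp head_letter_relabel_word.
case: (head_letter _) => //= c; apply/idP/idP => [Cpc | /p_fixes_C -> //].
by rewrite -(perm_inj (p_fixes_C Cpc)).
Qed.

Lemma relabel_perm_gen_mul j v : relabel_perm (gm j v) j = relabel_perm v j.
Proof.
rewrite /relabel_perm /fixed_branch (val_gen_mul k_gt1).
have [->|[-> ->]|[-> ->]] // := head_letter_gen_mul_seq j (val v).
all: by rewrite /=; case: ifP => // Cj; rewrite perm1 p_fixes_C.
Qed.

Lemma relabel_gen_mul j v : relabel (gm j v) = gm (relabel_perm v j) (relabel v).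
Proof.
apply: val_inj; rewrite !(val_gen_mul k_gt1) !val_relabel /relabel_perm /fixed_branch.
rewrite (val_gen_mul k_gt1); case: v => w _ /=.
have [->|[-> gw_nil]|[-> ->]] := head_letter_gen_mul_seq j w.
- by case: ifP; rewrite ?perm1 // relabel_word_gen_mul_seq.
- rewrite gw_nil /=; case: ifP => _; first by rewrite perm1 gw_nil.
  by rewrite -relabel_word_gen_mul_seq gw_nil.
- by rewrite /=; case: ifP => // Cj; rewrite p_fixes_C.
Qed.

Lemma relabel_vertex_arc x y : E x y -> E (relabel_vertex x) (relabel_vertex y).
Proof.
move=> /MarcE [xy1 xy2]; apply/MarcE; split=> /=; first by rewrite xy1 relabel_gen_mul.
by rewrite xy1 -(relabel_perm_gen_mul y.2) => /perm_inj.
Qed.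

End Relabel.

Lemma relabel_vertexK n k (p : {perm 'I_n}) (C : pred 'I_n) :
  (forall c, C c -> p c = c) ->
  cancel (@relabel_vertex n k p C) (@relabel_vertex n k p^-1%g C).
Proof.
move=> p_fixes_C [v i]; rewrite /relabel_vertex /relabel /relabel_perm /=.
case v_fixed: (fixed_branch C v); first by rewrite v_fixed !perm1.
rewrite fixed_branch_relabel_fp // v_fixed permK; congr (_, _).
apply: val_inj; rewrite !val_relabel_fp /relabel_word -map_comp map_id_in //.
by move=> [j e] _ /=; rewrite permK.
Qed.

Lemma relabel_vertex_automorphism n k (p : {perm 'I_n}) (C : pred 'I_n) :
  1 < k -> (forall c, C c -> p c = c) -> is_automorphism (@Marc n k) (relabel_vertex p C).
Proof.
move=> k_gt1 p_fixes_C.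
have pV_fixes_C c : C c -> p^-1%g c = c by move=> /p_fixes_C {1}<-; rewrite permK.
apply: (automorphism_can (g := relabel_vertex p^-1 C)); try exact: relabel_vertex_arc.
  exact: relabel_vertexK.
by have := @relabel_vertexK n k _ _ pV_fixes_C; rewrite invgK.
Qed.

Section HighArcTransitivity.
Variables (n k : nat).
Hypothesis k_gt1 : 1 < k.

Local Notation F := (FP n k).
Local Notation E := (@Marc n k).
Local Notation "1" := (fp1 n k).

Lemma Marc_vertex_transitive x y : exists f, is_automorphism E f /\ f x = y.
Proof.
have [h [xK _]] := fp_mul_can k_gt1 x.1.
exists (translate y.1 \o relabel_vertex (tperm x.2 y.2) pred0 \o translate h); split.
  apply: automorphism_comp; first apply: automorphism_comp.
  all: try exact: translate_automorphism.
  exact: relabel_vertex_automorphism.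
have hx : translate h x = (1, x.2).
  by rewrite /translate -[fp_mul h _]/(fp_mul h (fp_mul x.1 1)) xK.
rewrite /comp hx relabel_vertex1 tpermL.
by case: y.
Qed.

Lemma arc_source_rcons x y : E x y -> last_letter (val y.1) != Some y.2 ->
  val x.1 = rcons (val y.1) (y.2, 1%N).
Proof.
move=> /MarcE [-> _] fresh; rewrite val_gen_mul //.
exact: (iter_gen_mul_seq_fresh (t := 1)).
Qed.

(* Going backwards along an arc appends a letter to the normal form, so every
   earlier vertex of an s-arc ending at (1, c) lies in the branch of c. *)
Lemma sarc_to_unit_head s (y : nat -> F * 'I_n) c : is_sarc E s y -> y s = (1, c) ->
  forall t, t < s -> head_letter (val (y t).1) = Some c.
Proof.
move=> y_sarc ys.
pose P t := head_letter (val (y t).1) = Some c /\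
            last_letter (val (y t).1) = Some (y t.+1).2.
suff P_before d t : t + d.+1 = s -> P t.
  move=> t t_lt_s; have t_d : t + (s - t.+1).+1 = s by lia.
  by have [] := P_before _ _ t_d.
elim: d t => [|d IH] t t_d.
  have t1_s : t.+1 = s by rewrite -t_d addn1.
  have arc_t : E (y t) (y t.+1) by apply: y_sarc; rewrite -t1_s.
  by rewrite /P (arc_source_rcons arc_t) t1_s ys.
have [head_t1 last_t1] : P t.+1 by apply: IH; rewrite -t_d addSnnS.
have /MarcE [_ y12] : E (y t.+1) (y t.+2) by apply: y_sarc; lia.
have arc_t : E (y t) (y t.+1) by apply: y_sarc; lia.
rewrite /P (arc_source_rcons arc_t); last first.
  by rewrite last_t1; apply/eqP => -[/esym].
rewrite head_letter_rcons ?last_letter_rcons ?head_t1 //.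
by move: head_t1; case: (val _).
Qed.

Lemma sarc_extension_at_unit s (y : nat -> F * 'I_n) c z z' :
  is_sarc E s y -> y s = (1, c) -> E (y s) z -> E (y s) z' ->
  exists f, [/\ is_automorphism E f, forall t, t <= s -> f (y t) = y t & f z = z'].
Proof.
move=> y_sarc ys /(Marc_out k_gt1) [z1 cz] /(Marc_out k_gt1) [z'1 cz'].
rewrite ys /= in z1 z'1 cz cz'.
have tperm_fixes_c d : pred1 c d -> tperm z.2 z'.2 d = d.
  by move=> /eqP ->; rewrite tpermD // eq_sym.
exists (relabel_vertex (tperm z.2 z'.2) (pred1 c)); split.
- exact: relabel_vertex_automorphism.
- move=> t; rewrite leq_eqVlt => /predU1P [->|t_lt_s].
    by rewrite ys relabel_vertex1 (tperm_fixes_c c (eqxx c)).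
  rewrite /relabel_vertex /relabel /relabel_perm /fixed_branch.
  by rewrite (sarc_to_unit_head y_sarc ys) //= eqxx perm1; case: (y t).
- rewrite /relabel_vertex /relabel /relabel_perm /fixed_branch z1 val_gen_inv1 //=.
  rewrite eq_sym (negbTE cz) tpermL.
  case: z' z'1 {cz' tperm_fixes_c} => v' i' /= ->; congr (_, _).
  by apply: val_inj; rewrite val_relabel_fp !val_gen_inv1 //= tpermL.
Qed.

Lemma sarc_extension s (y : nat -> F * 'I_n) z z' :
  is_sarc E s y -> E (y s) z -> E (y s) z' ->
  exists f, [/\ is_automorphism E f, forall t, t <= s -> f (y t) = y t & f z = z'].
Proof.
move=> y_sarc arc_z arc_z'.
have [h [ysK hK]] := fp_mul_can k_gt1 (y s).1.
have translateK x : translate (y s).1 (translate h x) = x.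
  by case: x => v i; rewrite /translate /= hK.
pose ty t := translate h (y t).
have ty_sarc : is_sarc E s ty by move=> t /y_sarc; apply: translate_arc.
have tys : ty s = (1, (y s).2).
  by rewrite /ty /translate -[fp_mul h _]/(fp_mul h (fp_mul (y s).1 1)) ysK.
have [f [f_auto f_fix f_z]] := sarc_extension_at_unit ty_sarc tys
  (translate_arc k_gt1 h arc_z) (translate_arc k_gt1 h arc_z').
exists (translate (y s).1 \o f \o translate h); split => [|t t_le_s|] /=.
- by do 2?apply: automorphism_comp => //; exact: translate_automorphism.
- by rewrite -/(ty t) f_fix // /ty translateK.
- by rewrite f_z translateK.
Qed.

Lemma Marc_highly_arc_transitive : highly_arc_transitive E.
Proof.
elim=> [|s IH] x y x_sarc y_sarc.
  have [f [f_auto fx]] := Marc_vertex_transitive (x 0) (y 0).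
  by exists f; split=> // t; rewrite leqn0 => /eqP ->.
have sarc_s w : is_sarc E s.+1 w -> is_sarc E s w by move=> w_sarc t /ltnW /w_sarc.
have [f [f_auto f_xy]] := IH x y (sarc_s x x_sarc) (sarc_s y y_sarc).
have arc_fx : E (y s) (f (x s.+1)).
  by rewrite -f_xy //; apply: (f_auto.2 _ _).1; exact: x_sarc.
have [g [g_auto g_fix g_fx]] :=
  sarc_extension (sarc_s y y_sarc) arc_fx (y_sarc s (ltnSn s)).
exists (g \o f); split; first exact: automorphism_comp.
by move=> t; rewrite leq_eqVlt => /predU1P [-> // | t_le_s] /=; rewrite f_xy // g_fix.
Qed.

End HighArcTransitivity.

Section DegreesAndPropertyZ.
Variables (n k : nat).
Hypothesis k_gt1 : 1 < k.

Local Notation gm := (@gen_mul n k).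
Local Notation E := (@Marc n k).

Lemma size_enum_predC1 (i : 'I_n) : size (enum (predC1 i)) = n - 1.
Proof. by rewrite -cardE cardC1 card_ord subn1. Qed.

Lemma Marc_out_degree x : out_degree_is E x (n - 1).
Proof.
exists [seq (gen_inv j x.1, j) | j <- enum (predC1 x.2)]; split; [|split].
- by rewrite map_inj_uniq ?enum_uniq // => i j [].
- by rewrite size_map size_enum_predC1.
- move=> y; rewrite (Marc_out k_gt1); split=> [[y1 xy2] | /mapP [j]].
    apply/mapP; exists y.2; first by rewrite mem_enum inE eq_sym.
    by rewrite -y1; case: y {y1 xy2}.
  by rewrite mem_enum inE eq_sym => xj ->.
Qed.

Lemma Marc_in_degree x : in_degree_is E x (n - 1).
Proof.
exists [seq (gm x.2 x.1, j) | j <- enum (predC1 x.2)]; split; [|split].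
- by rewrite map_inj_uniq ?enum_uniq // => i j [].
- by rewrite size_map size_enum_predC1.
- move=> y; rewrite MarcE; split=> [[y1 /eqP yx2] | /mapP [j]].
    apply/mapP; exists y.2; first by rewrite mem_enum inE.
    by rewrite -y1; case: y {y1 yx2}.
  by rewrite mem_enum inE => /eqP xj ->; split.
Qed.

(* (v a_0, 1) -> (v, 0), and (v a_0, 0), (v a_0, 1) have the common out-neighbour
   (v a_0 a_2^-1, 2); so a homomorphism onto the line drops by 1 from (v, 0) to
   (v a_0, 0), which is absurd since a_0 has order k. *)
Lemma Marc_not_property_Z : 2 < n -> ~ property_Z E.
Proof.
move=> n_gt2 [phi [phi_arc _]].
pose i0 : 'I_n := Ordinal (ltnW (ltnW n_gt2)).
pose i1 : 'I_n := Ordinal (ltnW n_gt2).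
pose i2 : 'I_n := Ordinal n_gt2.
have phi_step v : phi (v, i0) = (phi (gm i0 v, i0) + 1)%R.
  set w := gen_inv i2 (gm i0 v).
  have arc1 : E (gm i0 v, i1) (v, i0) by apply/MarcE.
  have arc2 : E (gm i0 v, i1) (w, i2) by apply/MarcE; rewrite /= gen_invK.
  have arc3 : E (gm i0 v, i0) (w, i2) by apply/MarcE; rewrite /= gen_invK.
  rewrite (phi_arc _ _ arc1); have := phi_arc _ _ arc2.
  by rewrite (phi_arc _ _ arc3) => /GRing.addIr ->.
have phi_iter t v : phi (v, i0) = (phi (iter t (gm i0) v, i0) + t%:Z)%R.
  by elim: t v => [|t IH] v; rewrite ?GRing.addr0 // IH iterS phi_step; lia.
by have := phi_iter k (fp1 n k); rewrite iter_gen_mul_order //; lia.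
Qed.

End DegreesAndPropertyZ.

Theorem corollary5p4 (n k : nat) : 3 <= n -> 2 <= k ->
  highly_arc_transitive (@Marc n k) /\
  (forall x : FP n k * 'I_n,
     in_degree_is (@Marc n k) x (n - 1) /\ out_degree_is (@Marc n k) x (n - 1)) /\
  ~ property_Z (@Marc n k).
Proof.
move=> n_ge3 k_ge2; split; first exact: Marc_highly_arc_transitive.
split; last exact: Marc_not_property_Z.
by move=> x; split; [exact: Marc_in_degree | exact: Marc_out_degree].
Qed.
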